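(* For every $m\geq 1$, let $(p_m(x),q_m(x))$ be the symmetric decomposition of $x^mP_m(1/x)$. Then $p_m(x)$ and $q_m(x)$ are both unimodal.
   Context: The Boros–Moll polynomial is $P_m(x)=\sum_{i=0}^m d_i(m)x^i$ with $d_i(m)=2^{-2m}\sum_{k=i}^m 2^k\binom{2m-2k}{m-k}\binom{m+k}{k}\binom{k}{i}$. For a polynomial $f$ of degree $n$, its symmetric decomposition is the pair $(a(x),b(x))$ with $a(x)=\frac{f(x)-x^{n+1}f(1/x)}{1-x}$, $b(x)=\frac{x^nf(1/x)-f(x)}{1-x}$, so $f=a+xb$. A polynomial $\sum_{i=0}^n f_ix^i$ is unimodal if $f_0\le f_1\le\cdots\le f_k\ge f_{k+1}\ge\cdots\ge f_n$ for some $k$. *)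

From mathcomp Require Import all_boot all_order all_algebra.
Set Implicit Arguments. Unset Strict Implicit. Unset Printing Implicit Defensive.
Import Order.TTheory GRing.Theory Num.Theory.
Local Open Scope ring_scope.

Definition bm_coef (m i : nat) : rat :=
  (2%:R ^- (2 * m)) *
  \sum_(i <= k < m.+1)
     (2%:R ^+ k * ('C(2 * m - 2 * k, m - k))%:R * ('C(m + k, k))%:R
      * ('C(k, i))%:R).

Definition boros_moll (m : nat) : {poly rat} := \poly_(i < m.+1) bm_coef m i.

(* x^n f(1/x), for a polynomial f of degree at most n *)
Definition recip (n : nat) (f : {poly rat}) : {poly rat} :=
  \poly_(i < n.+1) f`_(n - i).

Definition sym_a (f : {poly rat}) : {poly rat} :=
  (f - 'X * recip (size f).-1 f) %/ (1 - 'X).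
Definition sym_b (f : {poly rat}) : {poly rat} :=
  (recip (size f).-1 f - f) %/ (1 - 'X).

Definition unimodal (f : {poly rat}) : Prop :=
  exists k : nat, (k <= (size f).-1)%N /\
    (forall i j : nat, (i <= j)%N -> (j <= k)%N -> f`_i <= f`_j) /\
    (forall i j : nat, (k <= i)%N -> (i <= j)%N -> (j <= (size f).-1)%N ->
        f`_j <= f`_i).

From mathcomp Require Import all_boot all_order all_algebra.
From mathcomp Require Import zify ring.
Set Implicit Arguments. Unset Strict Implicit. Unset Printing Implicit Defensive.
Import Order.TTheory GRing.Theory Num.Theory.
Local Open Scope ring_scope.

(* Write d_i(m) = 2^(-2m) \sum_k w_k C(k, i) with w_k = 2^k C(2m-2k, m-k) C(m+k, k);
   the weights w_k are nondecreasing in k. The coefficients of f = x^m P_m(1/x) are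
   f_j = d_(m-j), and the consecutive differences of its symmetric decomposition (a, b)
   are a_(j+1) - a_j = d_(m-j-1) - d_j and b_(j+1) - b_j = d_(j+1) - d_(m-j-1). So
   unimodality reduces to two comparisons of the d_i:
   - d_(m-i) <= d_i for 2i <= m, termwise since C(k, m-i) <= C(k, i);
   - d_(i-1) <= d_(m-i) for 2i <= m+1: termwise this fails for k < m, but the
     hockey-stick identity gives \sum_k C(k, m-i) = \sum_k C(k, i-1), and against
     weights maximal at k = m the difference is then nonnegative (Abel summation). *)

Lemma homo_leq_range (T : Type) (r : T -> T -> Prop) (f : nat -> T) lo hi :
  (forall x, r x x) -> (forall y x z, r x y -> r y z -> r x z) ->
  (forall i, (lo <= i < hi)%N -> r (f i) (f i.+1)) ->
  forall i j, (lo <= i)%N -> (i <= j <= hi)%N -> r (f i) (f j).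
Proof.
move=> r_refl r_trans f_step i j lo_i /andP[le_ij le_j].
apply: (@homo_leq_in _ [pred k | lo <= k <= hi]%N f r r_refl r_trans); rewrite ?inE.
- by move=> a b; rewrite !inE => aD bD c acb; rewrite inE; lia.
- by move=> a; rewrite !inE => aD SaD; apply: f_step; lia.
- by rewrite lo_i (leq_trans le_ij le_j).
- by rewrite (leq_trans lo_i le_ij) le_j.
- exact: le_ij.
Qed.

Lemma unimodal_steps (p : {poly rat}) k :
  (k <= (size p).-1)%N ->
  (forall j, (j < k)%N -> p`_j <= p`_j.+1) ->
  (forall j, (k <= j < (size p).-1)%N -> p`_j.+1 <= p`_j) ->
  unimodal p.
Proof.
move=> le_k up down; exists k; split=> //; split=> [i j le_ij le_jk|i j le_ki le_ij le_j].
- apply: (homo_leq_range (r := fun x y => x <= y) (f := fun l => p`_l) (hi := k)).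
  + exact: lexx.
  + by move=> y x z; apply: le_trans.
  + by move=> l /andP[_]; apply: up.
  + exact: leq0n.
  + by rewrite le_ij.
- apply: (homo_leq_range (r := fun x y => y <= x) (f := fun l => p`_l) (lo := k)
    (hi := (size p).-1)) => //.
  + by move=> y x z yx zy; apply: le_trans zy yx.
  + by rewrite le_ij.
Qed.

Lemma leq_bin2r k s t : (s <= t)%N -> (s + t <= k)%N -> ('C(k, s) <= 'C(k, t))%N.
Proof.
move=> le_st le_k.
have lower_half u : (s <= u)%N -> (u.*2 <= k)%N -> ('C(k, s) <= 'C(k, u))%N.
  move=> le_su le_uk.
  apply: (homo_leq_range (r := leq) (f := fun i => 'C(k, i)) (lo := s) (hi := u)) => //.
  - exact: leq_trans.
  - move=> i /andP[_ lt_iu]; rewrite -(leq_pmul2l (ltn0Sn i)) mul_bin_left.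
    by rewrite leq_mul //; lia.
  - by rewrite le_su leqnn.
have [|lt_kt] := leqP t.*2 k; first exact: lower_half.
by rewrite -(bin_sub (_ : t <= k)%N) ?lower_half //; lia.
Qed.

Lemma leq_bin_sub k m i j :
  (k + i <= m + j)%N -> (i + j <= m)%N -> ('C(k, m - i) <= 'C(k, j))%N.
Proof.
move=> le_k le_ij; have [lt_k|le_mik] := ltnP k (m - i); first by rewrite bin_small.
by rewrite -(bin_sub le_mik) leq_bin2r //; lia.
Qed.

Lemma hockey_stick n j : (\sum_(k < n) 'C(k, j))%N = 'C(n, j.+1).
Proof.
elim: n => [|n IHn]; first by rewrite big_ord0.
by rewrite big_ord_recr /= IHn binS.
Qed.

Lemma central_binS j : (j.+1 * 'C(j.*2.+2, j.+1) = 2 * j.*2.+1 * 'C(j.*2, j))%N.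
Proof.
have bin_mid : 'C(j.*2.+1, j.+1) = 'C(j.*2.+1, j).
  have le_j : (j.+1 <= j.*2.+1)%N by lia.
  by rewrite -[in LHS](bin_sub le_j) subSS -addnn addnK.
have diag2 := mul_bin_diag j.*2.+2 j; have diag1 := mul_bin_diag j.*2.+1 j.
rewrite /= -bin_mid in diag2.
by rewrite -diag2 -mulnA diag1 mulnA mul2n doubleS.
Qed.

Definition bm_weight (m k : nat) : nat :=
  (2 ^ k * 'C(2 * m - 2 * k, m - k) * 'C(m + k, k))%N.

Lemma bm_weight_gt0 m k : (k <= m)%N -> (0 < bm_weight m k)%N.
Proof. by move=> le_km; rewrite !muln_gt0 expn_gt0 !bin_gt0; lia. Qed.

Lemma bm_weight_leS m k : (k < m)%N -> (bm_weight m k <= bm_weight m k.+1)%N.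
Proof.
move=> lt_km; have [j ->] : exists j, m = (k + j.+1)%N by exists (m - k.+1)%N; lia.
rewrite /bm_weight.
have -> : (2 * (k + j.+1) - 2 * k = j.*2.+2)%N by lia.
have -> : (2 * (k + j.+1) - 2 * k.+1 = j.*2)%N by lia.
have -> : (k + j.+1 - k = j.+1)%N by lia.
have -> : (k + j.+1 - k.+1 = j)%N by lia.
have -> : (k + j.+1 + k = k.*2 + j.+1)%N by lia.
have -> : (k + j.+1 + k.+1 = k.*2 + j.+2)%N by lia.
(* With m = k + j + 1, consecutive weights are in the ratio (2j+1)(k+1) : (j+1)(2k+j+2). *)
rewrite -(@leq_pmul2l (j.+1 * k.+1)) ?muln_gt0 //.
have diagS := mul_bin_diag (k.*2 + j.+2) k.
rewrite (_ : (k.*2 + j.+2).-1 = k.*2 + j.+1)%N /= in diagS; last by rewrite addnS.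
set c := 'C(j.*2, j); set b := 'C(k.*2 + j.+1, k).
have lhsE : (j.+1 * k.+1 * (2 ^ k * 'C(j.*2.+2, j.+1) * b)
    = 2 ^ k * (j.+1 * 'C(j.*2.+2, j.+1)) * (k.+1 * b))%N by ring.
have rhsE : (j.+1 * k.+1 * (2 ^ k.+1 * c * 'C(k.*2 + j.+2, k.+1))
    = 2 ^ k.+1 * c * j.+1 * (k.+1 * 'C(k.*2 + j.+2, k.+1)))%N by ring.
rewrite lhsE rhsE central_binS -diagS -/c -/b.
have -> : (2 ^ k * (2 * j.*2.+1 * c) * (k.+1 * b)
    = 2 ^ k.+1 * c * b * (j.*2.+1 * k.+1))%N by rewrite expnS; ring.
have -> : (2 ^ k.+1 * c * j.+1 * ((k.*2 + j.+2) * b)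
    = 2 ^ k.+1 * c * b * (j.+1 * (k.*2 + j.+2)))%N by ring.
by rewrite leq_mul2l; apply/orP; right; nia.
Qed.

Lemma bm_weight_le_last m k : (k <= m)%N -> (bm_weight m k <= bm_weight m m)%N.
Proof.
move=> le_km; apply: (homo_leq_range (r := leq) (f := bm_weight m) (lo := k) (hi := m)).
- exact: leqnn.
- exact: leq_trans.
- by move=> i /andP[_]; apply: bm_weight_leS.
- exact: leqnn.
- by rewrite le_km leqnn.
Qed.

Lemma weighted_sum_ge0 (R : numDomainType) (w t : nat -> R) n :
  \sum_(k < n.+1) t k = 0 ->
  (forall k, (k < n)%N -> t k <= 0) -> (forall k, (k < n)%N -> w k <= w n) ->
  0 <= \sum_(k < n.+1) w k * t k.
Proof.
move=> t_sum t_le0 w_le.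
have -> : \sum_(k < n.+1) w k * t k = \sum_(k < n.+1) (w k - w n) * t k.
  under [RHS]eq_bigr do rewrite mulrBl.
  by rewrite sumrB -mulr_sumr t_sum mulr0 subr0.
rewrite big_ord_recr /= subrr mul0r addr0.
by apply: sumr_ge0 => k _; rewrite mulr_le0 ?subr_le0 ?w_le ?t_le0.
Qed.

Lemma bm_coefE m i :
  bm_coef m i = 2%:R ^- (2 * m) * \sum_(k < m.+1) (bm_weight m k * 'C(k, i))%:R.
Proof.
rewrite /bm_coef -(big_mkord xpredT (fun k => (bm_weight m k * 'C(k, i))%:R : rat)).
rewrite (big_nat_widenl _ _ _ _ _ (leq0n i)) big_mkcond.
congr (_ * _); apply: eq_bigr => k _ /=.
case: leqP => [_|lt_ki]; first by rewrite /bm_weight !natrM natrX.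
by rewrite bin_small // muln0.
Qed.

Lemma bm_coef_gt0 m i : (i <= m)%N -> 0 < bm_coef m i.
Proof.
move=> le_im; rewrite bm_coefE mulr_gt0 ?invr_gt0 ?exprn_gt0 // big_ord_recr /=.
rewrite ltr_wpDl ?sumr_ge0 // ltr0n muln_gt0 bm_weight_gt0 // bin_gt0 //.
Qed.

Lemma bm_coef_last_lt_first m : (0 < m)%N -> bm_coef m m < bm_coef m 0.
Proof.
move=> m_gt0; rewrite !bm_coefE ltr_pM2l ?invr_gt0 ?exprn_gt0 //.
rewrite [X in X < _]big_ord_recr [X in _ < X]big_ord_recr /= binn bin0 ltrD2r.
rewrite big1 => [|k _]; last by rewrite bin_small // muln0.
case: m m_gt0 => // m _; rewrite big_ord_recl /= ltr_wpDr ?sumr_ge0 //.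
by rewrite ltr0n bin0 muln1 bm_weight_gt0.
Qed.

Lemma bm_coef_sub_le m i : (2 * i <= m)%N -> bm_coef m (m - i) <= bm_coef m i.
Proof.
move=> le_im; rewrite !bm_coefE ler_pM2l ?invr_gt0 ?exprn_gt0 //.
apply: ler_sum => k _; rewrite ler_nat leq_mul // leq_bin_sub //; have := ltn_ord k; lia.
Qed.

Lemma bm_coef_pred_le m i :
  (0 < i)%N -> (2 * i <= m.+1)%N -> bm_coef m i.-1 <= bm_coef m (m - i).
Proof.
move=> i_gt0 le_im; rewrite !bm_coefE ler_pM2l ?invr_gt0 ?exprn_gt0 // -subr_ge0.
set t := fun k => ('C(k, m - i))%:R - ('C(k, i.-1))%:R : rat.
have -> : \sum_(k < m.+1) (bm_weight m k * 'C(k, m - i))%:R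
    - \sum_(k < m.+1) (bm_weight m k * 'C(k, i.-1))%:R
    = \sum_(k < m.+1) (bm_weight m k)%:R * t k.
  by rewrite -sumrB; apply: eq_bigr => k _; rewrite !natrM mulrBr.
apply: (weighted_sum_ge0 (w := fun k => (bm_weight m k)%:R) (t := t)).
- rewrite /t sumrB -!natr_sum !hockey_stick prednK //.
  have -> : ((m - i).+1 = m.+1 - i)%N by lia.
  by rewrite bin_sub ?subrr //; lia.
- by move=> k lt_km; rewrite subr_le0 ler_nat leq_bin_sub //; lia.
- by move=> k lt_km; rewrite ler_nat bm_weight_le_last // ltnW.
Qed.

Section DivisionBy1SubX.
Variable F : fieldType.
Implicit Types N : {poly F}.

Lemma size_1subX : size (1 - 'X : {poly F}) = 2%N.
Proof. by rewrite -opprB size_polyN size_XsubC. Qed.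

Lemma divp_1subXK N : N.[1] = 0 -> N %/ (1 - 'X) * (1 - 'X) = N.
Proof. by move=> N1; rewrite divpK // -opprB dvdpNl dvdp_XsubCl /root N1. Qed.

Lemma size_divp_1subX N : size (N %/ (1 - 'X)) = (size N).-1.
Proof. by rewrite size_divp -?size_poly_eq0 size_1subX ?subn1. Qed.

Lemma coef_divp_1subX N j : N.[1] = 0 ->
  (N %/ (1 - 'X))`_j.+1 - (N %/ (1 - 'X))`_j = N`_j.+1.
Proof. by move=> N1; rewrite -{3}(divp_1subXK N1) mulrBr mulr1 coefB coefMX. Qed.

End DivisionBy1SubX.

Lemma horner1_poly_sub_rev (R : comNzRingType) (E : nat -> R) n :
  (\poly_(i < n.+1) (E i - E (n - i)%N)).[1] = 0.
Proof.
rewrite horner_poly; under eq_bigr do rewrite expr1n mulr1.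
rewrite sumrB -(big_mkord xpredT (fun i => E (n - i)%N)) big_rev_mkord subn0.
rewrite [X in _ - X](eq_bigr (fun i : 'I_n.+1 => E i)) ?subrr // => i _.
by rewrite subSS subKn // -ltnS.
Qed.

Section SymmetricDecomposition.
Implicit Types f : {poly rat}.

Lemma coef_recip n f i : (recip n f)`_i = if (i <= n)%N then f`_(n - i) else 0.
Proof. by rewrite coef_poly ltnS. Qed.

Lemma sym_a_numE n f : (size f <= n.+1)%N ->
  f - 'X * recip n f = \poly_(i < n.+2) (f`_i - f`_(n.+1 - i)).
Proof.
move=> le_f; apply/polyP => i; rewrite coefB coefXM coef_recip coef_poly.
case: i => [|i] /=; first by rewrite subn0 (nth_default _ le_f) !subr0.
rewrite !ltnS subSS; case: leqP => // lt_ni.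
by rewrite subr0 nth_default // (leq_trans le_f (leqW lt_ni)).
Qed.

Lemma sym_b_numE n f : (size f <= n.+1)%N ->
  recip n f - f = - \poly_(i < n.+1) (f`_i - f`_(n - i)).
Proof.
move=> le_f; apply/polyP => i; rewrite coefB coefN coef_recip coef_poly ltnS.
case: leqP => [_|lt_ni]; first by rewrite opprB.
by rewrite nth_default ?subr0 ?oppr0 // (leq_trans le_f lt_ni).
Qed.

Lemma size_sym_a n f : size f = n.+1 -> f`_0 != 0 -> size (sym_a f) = n.+1.
Proof.
move=> sz_f f0; rewrite /sym_a size_divp_1subX sz_f sym_a_numE ?sz_f //.
by rewrite size_poly_eq //= subnn nth_default ?sz_f // sub0r oppr_eq0.
Qed.

Lemma coef_sym_a_step n f j : size f = n.+1 -> (j <= n)%N ->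
  (sym_a f)`_j.+1 - (sym_a f)`_j = f`_j.+1 - f`_(n - j).
Proof.
move=> sz_f le_jn; rewrite /sym_a sz_f /= sym_a_numE ?sz_f //.
by rewrite coef_divp_1subX ?horner1_poly_sub_rev // coef_poly ltnS ltnS le_jn subSS.
Qed.

Lemma size_sym_b n f : size f = n.+1 -> f`_0 != f`_n -> size (sym_b f) = n.
Proof.
move=> sz_f f0n; rewrite /sym_b size_divp_1subX sz_f sym_b_numE ?sz_f //.
by rewrite size_polyN size_poly_eq // subnn subr_eq0 eq_sym.
Qed.

Lemma coef_sym_b_step n f j : size f = n.+1 -> (j < n)%N ->
  (sym_b f)`_j.+1 - (sym_b f)`_j = f`_(n - j.+1) - f`_j.+1.
Proof.
move=> sz_f lt_jn; rewrite /sym_b sz_f /= sym_b_numE ?sz_f //.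
rewrite coef_divp_1subX ?hornerN ?horner1_poly_sub_rev ?oppr0 //.
by rewrite coefN coef_poly ltnS lt_jn opprB.
Qed.

End SymmetricDecomposition.

Section BorosMollReciprocal.
Variable m : nat.
Local Notation d := (bm_coef m).
Local Notation f := (recip m (boros_moll m)).

Lemma coef_recip_bm j : (j <= m)%N -> f`_j = d (m - j).
Proof. by move=> le_jm; rewrite coef_recip le_jm coef_poly ltnS leq_subr. Qed.

Lemma size_recip_bm : size f = m.+1.
Proof. by rewrite size_poly_eq // subnn coef_poly /= gt_eqF ?bm_coef_gt0. Qed.

Lemma unimodal_sym_a_bm : unimodal (sym_a f).
Proof.
have f0 : f`_0 != 0 by rewrite coef_recip_bm // subn0 gt_eqF ?bm_coef_gt0.
apply: (unimodal_steps (k := m./2)); rewrite ?(size_sym_a size_recip_bm f0) /=.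
- lia.
- move=> j lt_j; rewrite -subr_ge0 (coef_sym_a_step size_recip_bm); last by lia.
  rewrite !coef_recip_bm ?subKn ?subr_ge0; try lia.
  by apply: (bm_coef_pred_le (i := j.+1)); lia.
- move=> j /andP[le_j lt_j].
  rewrite -subr_le0 (coef_sym_a_step size_recip_bm); last by lia.
  rewrite !coef_recip_bm ?subKn ?subr_le0; try lia.
  have := bm_coef_pred_le (m := m) (i := m - j).
  by rewrite (_ : (m - j).-1 = m - j.+1)%N ?subKn; [apply; lia | lia | lia].
Qed.

Lemma unimodal_sym_b_bm : (0 < m)%N -> unimodal (sym_b f).
Proof.
move=> m_gt0; have f0m : f`_0 != f`_m.
  by rewrite !coef_recip_bm // subn0 subnn lt_eqF ?bm_coef_last_lt_first.
apply: (unimodal_steps (k := m.-1./2)); rewrite ?(size_sym_b size_recip_bm f0m).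
- lia.
- move=> j lt_j; rewrite -subr_ge0 (coef_sym_b_step size_recip_bm); last by lia.
  rewrite !coef_recip_bm ?subKn ?subr_ge0; try lia.
  by apply: bm_coef_sub_le; lia.
- move=> j /andP[le_j lt_j].
  rewrite -subr_le0 (coef_sym_b_step size_recip_bm); last by lia.
  rewrite !coef_recip_bm ?subKn ?subr_le0; try lia.
  have := bm_coef_sub_le (m := m) (i := m - j.+1).
  by rewrite subKn; [apply; lia | lia].
Qed.

End BorosMollReciprocal.

Theorem proposition1p4 (m : nat) : (1 <= m)%N ->
  unimodal (sym_a (recip m (boros_moll m))) /\
  unimodal (sym_b (recip m (boros_moll m))).
Proof. by move=> m_gt0; split; [apply: unimodal_sym_a_bm | apply: unimodal_sym_b_bm]. Qed.
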